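(* Let $\xi(0),\xi(1),\xi(2),\dots$ be a sequence of vectors $\xi(k)=(\xi_1(k),\dots,\xi_d(k))\in\mathbb{R}^d$. For $\nu\geq 1$, $n\geq 1$ and $1\leq i_1,\dots,i_\nu\leq d$ define the iterated sum \[ \Sigma^{i_1,\dots,i_\nu}(n)=\sum_{0\leq k_1<\dots<k_\nu<n}\xi_{i_1}(k_1)\xi_{i_2}(k_2)\cdots\xi_{i_\nu}(k_\nu). \] Suppose that \[ \limsup_{n\to\infty} n^{-1}\sum_{k=0}^n|\xi(k)|=R<\infty \] and that the limit \[ \lim_{n\to\infty}n^{-1}\sum_{k=0}^n\xi(k)=Q=(Q_1,\dots,Q_d) \] exists with $|Q|<\infty$. Then for any $\nu\geq1$ and any $1\leq i_1,\dots,i_\nu\leq d$, \[ \lim_{n\to\infty}n^{-\nu}\Sigma^{i_1,\dots,i_\nu}(n)=\frac 1{\nu !}\prod_{j=1}^\nu Q_{i_j}. \]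
   Context: $|\cdot|$ denotes the Euclidean norm on $\mathbb{R}^d$. *)

From HB Require Import structures.
From mathcomp Require Import all_boot all_order all_algebra.
From mathcomp Require Import all_classical all_reals all_analysis.
Set Implicit Arguments. Unset Strict Implicit. Unset Printing Implicit Defensive.
Import Order.TTheory GRing.Theory Num.Theory.
Local Open Scope ring_scope.

Definition eucl_norm (R : realType) (d : nat) (x : 'rV[R]_d) : R :=
  Num.sqrt (\sum_(i < d) x ord0 i ^+ 2).

Definition iter_sum (R : realType) (d nu : nat) (xi : nat -> 'rV[R]_d)
    (s : nu.-tuple 'I_d) (n : nat) : R :=
  \sum_(t : nu.-tuple 'I_n | sorted ltn (map val t))
     \prod_(j < nu) xi (val (tnth t j)) ord0 (tnth s j).

From HB Require Import structures.
From mathcomp Require Import all_boot all_order all_algebra.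
From mathcomp Require Import all_classical all_reals all_analysis.
From mathcomp Require Import ring lra.
Import Order.TTheory GRing.Theory Num.Theory numFieldNormedType.Exports.
Local Open Scope classical_set_scope.
Local Open Scope ring_scope.

(* Iterated sums satisfy Sigma^{i_1..i_nu+1}(n) = sum_{k<n} Sigma^{i_1..i_nu}(k) xi_{i_nu+1}(k),
   so by induction on nu it suffices to show: if b(k) = c k^m + o(k^m), the partial sums
   of a are q n + o(n) and sum_{k<n} |a(k)| = O(n), then
   sum_{k<n} b(k) a(k) = c q n^{m+1}/(m+1) + o(n^{m+1}).  Summation by parts against the
   partial sums of a - q reduces the main term c sum_{k<n} k^m a(k) to
   c q sum_{k<n} k^m = c q n^{m+1}/(m+1) + O(n^m), and the remainder
   sum_{k<n} o(k^m) a(k) is o(n^{m+1}) because sum_{k<n} |a(k)| = O(n). *)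

Lemma expr_diff_bounds {R : realFieldType} (y : R) (m : nat) : 0 <= y ->
  m.+1%:R * y ^+ m <= (y + 1) ^+ m.+1 - y ^+ m.+1 <= m.+1%:R * (y + 1) ^+ m.
Proof.
move=> y0; rewrite subrXX addrAC subrr add0r mul1r.
have const_sum (x : R) : m.+1%:R * x = \sum_(i < m.+1) x.
  by rewrite sumr_const card_ord mulr_natl.
rewrite !const_sum.
have yy1 : y <= y + 1 by rewrite lerDl.
have y1 : 0 <= y + 1 by rewrite addr_ge0.
have split_m (i : 'I_m.+1) : (m - i + i = m)%N by rewrite subnK // -ltnS.
apply/andP; split; apply: ler_sum => i _ /=.
  by rewrite -[in leLHS](split_m i) exprD ler_wpM2r ?exprn_ge0 // lerXn2r ?nnegrE.
by rewrite -[in leRHS](split_m i) exprD ler_wpM2l ?exprn_ge0 // lerXn2r ?nnegrE.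
Qed.

Lemma sum_powers_dist {R : realFieldType} (m n : nat) :
  `|\sum_(0 <= x < n) x%:R ^+ m - n%:R ^+ m.+1 / m.+1%:R| <= n%:R ^+ m :> R.
Proof.
have tel : n%:R ^+ m.+1 = \sum_(0 <= x < n) ((x.+1%:R : R) ^+ m.+1 - x%:R ^+ m.+1).
  by rewrite (telescope_sumr (fun x => (x%:R : R) ^+ m.+1)) // expr0n subr0.
have lower : m.+1%:R * \sum_(0 <= x < n) (x%:R : R) ^+ m <= n%:R ^+ m.+1.
  rewrite tel mulr_sumr; apply: ler_sum => x _; rewrite -(natr1 x).
  by case/andP: (expr_diff_bounds _ m (ler0n R x)).
have upper : n%:R ^+ m.+1 <= m.+1%:R * (\sum_(0 <= x < n) (x%:R : R) ^+ m + n%:R ^+ m).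
  rewrite tel; apply: (@le_trans _ _ (\sum_(0 <= x < n) m.+1%:R * (x.+1%:R : R) ^+ m)).
    apply: ler_sum => x _; rewrite -(natr1 x).
    by case/andP: (expr_diff_bounds _ m (ler0n R x)).
  rewrite -mulr_sumr ler_wpM2l //.
  have shift : \sum_(0 <= x < n.+1) (x%:R : R) ^+ m =
      0%:R ^+ m + \sum_(0 <= x < n) (x.+1%:R : R) ^+ m by rewrite big_nat_recl.
  by rewrite big_nat_recr //= in shift; rewrite shift lerDr exprn_ge0.
have hV : n%:R ^+ m.+1 = m.+1%:R * (n%:R ^+ m.+1 / m.+1%:R) :> R.
  by rewrite mulrC divfK // pnatr_eq0.
rewrite hV in lower upper.
rewrite ler_pM2l ?ltr0Sn // in lower; rewrite ler_pM2l ?ltr0Sn // in upper.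
have dist_le (P V X : R) : P <= V -> V <= P + X -> `|P - V| <= X.
  by move=> *; rewrite ler_norml; apply/andP; split; lra.
exact: dist_le lower upper.
Qed.

Lemma sum_by_parts {R : comPzRingType} (f e : nat -> R) (n : nat) :
  \sum_(0 <= x < n) f x * e x =
  f n * \sum_(0 <= k < n) e k
  - \sum_(0 <= j < n) (f j.+1 - f j) * \sum_(0 <= k < j.+1) e k.
Proof.
elim: n => [|n IH]; first by rewrite !big_geq // mulr0 subr0.
by rewrite !big_nat_recr //= IH; ring.
Qed.

Lemma norm_sum_le_head_tail {R : numDomainType} (z w : nat -> R) (e : R) (K n : nat) :
  0 <= e -> (forall j, (K <= j)%N -> `|z j| <= e * `|w j|) ->
  `|\sum_(0 <= j < n) z j| <= \sum_(0 <= j < K) `|z j| + e * \sum_(0 <= j < n) `|w j|.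
Proof.
move=> e0 zw; apply: le_trans (ler_norm_sum _ _ _) _.
have split_head : \sum_(0 <= j < n) `|z j| <=
    \sum_(0 <= j < n) ((if (j < K)%N then `|z j| else 0) + e * `|w j|).
  apply: ler_sum => j _; case: ifPn => [_|]; first by rewrite lerDl mulr_ge0.
  by rewrite -leqNgt add0r => /zw.
apply: le_trans split_head _; rewrite big_split /= -mulr_sumr lerD2r -big_mkcond /=.
rewrite (big_nat_widen 0 K (n + K) xpredT) ?leq_addl //=.
by rewrite (big_cat_nat _ (leq_addr K n)) //= lerDl sumr_ge0.
Qed.

Lemma big_tuple_rcons {R : Type} {idx : R} {op : Monoid.com_law idx} (T : finType)
    (nu : nat) (F : nu.+1.-tuple T -> R) :
  \big[op/idx]_(t : nu.+1.-tuple T) F t =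
  \big[op/idx]_(x : T) \big[op/idx]_(t : nu.-tuple T) F [tuple of rcons t x].
Proof.
rewrite (reindex (fun p : nu.-tuple T * T => [tuple of rcons p.1 p.2])) /=.
  rewrite -(pair_bigA _ (fun (t : nu.-tuple T) (x : T) => F [tuple of rcons t x])).
  exact: exchange_big.
exists (fun t : nu.+1.-tuple T =>
    ([tuple of belast (thead t) (behead_tuple t)], last (thead t) (behead_tuple t))).
  move=> [t x] _ /=.
  have := lastI (thead [tuple of rcons t x]) (behead [tuple of rcons t x]).
  have -> : thead [tuple of rcons t x] :: behead [tuple of rcons t x] = rcons t x.
    by symmetry; exact: (congr1 val (tuple_eta [tuple of rcons t x])).
  move=> /rcons_inj [Et <-]; congr pair.
  by apply: val_inj; rewrite /= -Et.
by move=> t _; apply: val_inj; rewrite /= -lastI [in RHS](tuple_eta t).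
Qed.

Fixpoint nested_sum {R : pzSemiRingType} (g : nat -> nat -> R) (nu n : nat) : R :=
  if nu is nu'.+1 then \sum_(0 <= k < n) nested_sum g nu' k * g nu' k else 1.

Lemma pairwise_ltn_rcons2 (s : seq nat) (x n : nat) :
  pairwise ltn (rcons (rcons s x) n) = (x < n)%N && pairwise ltn (rcons s x).
Proof.
rewrite pairwise_rcons all_rcons [pairwise _ (rcons s x)]pairwise_rcons -andbA.
apply/andP/andP => [[xn /andP[_ sp]] | [xn sp]]; split=> //.
rewrite sp andbT; case/andP: sp => /allP sx _.
by apply/allP => y /sx yx; apply: ltn_trans yx xn.
Qed.

Lemma nested_sum_tuples {R : comPzSemiRingType} (g : nat -> nat -> R) (nu N n : nat) :
  (n <= N)%N ->
  \sum_(t : nu.-tuple 'I_N | pairwise ltn (rcons (map val t) n))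
     \prod_(j < nu) g j (tnth t j) = nested_sum g nu n.
Proof.
elim: nu n => [|nu IH] n nN /=.
  by rewrite (big_pred1 [tuple]) ?big_ord0 // => t; rewrite tuple0 /= eqxx.
rewrite big_mkcond big_tuple_rcons /= big_mkord.
rewrite (big_ord_widen N (fun x => nested_sum g nu x * g nu x)) //.
rewrite [RHS]big_mkcond; apply: eq_bigr => x _ /=; rewrite -big_mkcond /=.
under eq_bigl => t do rewrite map_rcons pairwise_ltn_rcons2.
case: ltnP => xn /=; last by rewrite big_pred0.
rewrite -(IH x) ?(leq_trans (ltnW xn)) // big_distrl /=.
apply: eq_bigr => t _; rewrite big_ord_recr /=.
have tnth_rcons (j : 'I_nu.+1) : tnth [tuple of rcons t x] j = nth x (rcons t x) j.
  exact: tnth_nth.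
congr (_ * _); last by rewrite tnth_rcons nth_rcons size_tuple ltnn eqxx.
apply: eq_bigr => j _; rewrite tnth_rcons nth_rcons size_tuple /= ltn_ord.
by rewrite (tnth_nth x).
Qed.

Lemma littleoD {K : numFieldType} {T : Type} {V W : normedModType K} {F : filter_on T}
    (f g : T -> V) (e : T -> W) :
  f =o_F e -> g =o_F e -> f + g =o_F e.
Proof. by move=> -> ->; rewrite addo. Qed.

Lemma littleoZ {K : numFieldType} {T : Type} {V W : normedModType K} {F : filter_on T}
    (a : K) (f : T -> V) (e : T -> W) :
  f =o_F e -> a *: f =o_F e.
Proof. by move=> ->; rewrite scaleo. Qed.

Lemma littleoMl {K : numFieldType} {T : Type} {F : filter_on T} {f w : T -> K} (g : T -> K) :
  f =o_F w -> (fun x => g x * f x) =o_F (fun x => g x * w x).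
Proof.
move=> /eqoP fw; apply/eqoP => e e0; apply: filterS (fw e e0) => x fwx.
by rewrite !normrM mulrCA ler_wpM2l.
Qed.

Lemma littleo_partial_sums {K : numFieldType} (z w W : nat -> K) :
  z =o_\oo w -> (fun n => \sum_(0 <= j < n) `|w j|) =O_\oo W ->
  (fun=> 1 : K) =o_\oo W -> (fun n => \sum_(0 <= j < n) z j) =o_\oo W.
Proof.
move=> /eqoP zw /eqO_exP[k k0 hk] /eqoP oneW; apply/eqoP => e e0.
set eps := e / (k + 1).
have eps0 : 0 < eps by rewrite divr_gt0 // addr_gt0.
have [N _ zwN] := zw eps eps0.
set C := \sum_(0 <= j < N) `|z j|.
have C0 : 0 <= C by rewrite sumr_ge0.
have C1eps : 0 < eps / (C + 1) by rewrite divr_gt0 // ltr_wpDl.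
near=> n.
apply: le_trans (norm_sum_le_head_tail _ _ _ _ n (ltW eps0) zwN) _.
have headW : C <= eps * `|W n|.
  have : `|1| <= eps / (C + 1) * `|W n| by near: n; exact: oneW.
  rewrite normr1 mulrAC ler_pdivlMr ?ltr_wpDl // mul1r; apply: le_trans.
  by rewrite lerDl.
have tailW : \sum_(0 <= j < n) `|w j| <= k * `|W n|.
  by rewrite -[leLHS]ger0_norm ?sumr_ge0 //; near: n.
apply: le_trans (_ : _ <= eps * `|W n| + eps * (k * `|W n|)) _.
  by rewrite lerD // ler_wpM2l // ltW.
have -> : eps * `|W n| + eps * (k * `|W n|) = e * `|W n|.
  by rewrite /eps; field; rewrite gt_eqF // addr_gt0.
by [].
Unshelve. all: by end_near. Qed.

Section PowerAsymptotics.
Context {R : archiRealFieldType}.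

Lemma pow_littleo_pow {p q : nat} : (p < q)%N ->
  (fun n : nat => n%:R ^+ p : R) =o_\oo (fun n : nat => n%:R ^+ q : R).
Proof.
move=> pq; apply/eqoP => e e0; near=> n.
have n1 : (1 : R) <= n%:R by rewrite ler1n; near: n; exact: nbhs_infty_ge.
rewrite !ger0_norm ?exprn_ge0 // -(subnK (ltnW pq)) exprD mulrA ler_peMl ?exprn_ge0 //.
rewrite -subn_gt0 in pq; rewrite -(prednK pq) exprS mulrA.
apply: le_trans (ler_wpM2l _ (exprn_ege1 _ n1)); last by rewrite mulr_ge0 // ltW.
rewrite mulr1 -ler_pdivrMl // mulr1; apply: ltW; near: n; exact: nbhs_infty_gtr.
Unshelve. all: by end_near. Qed.

Lemma sum_powers_littleo (m : nat) :
  (fun n : nat => \sum_(0 <= x < n) x%:R ^+ m - n%:R ^+ m.+1 / m.+1%:R : R)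
    =o_\oo (fun n : nat => n%:R ^+ m.+1 : R).
Proof.
have /eqoP pow_small := pow_littleo_pow (ltnSn m).
apply/eqoP => e e0; apply: filterS (pow_small e e0) => n; apply: le_trans.
by rewrite (ger0_norm (exprn_ge0 m (ler0n R n))) sum_powers_dist.
Qed.

Lemma one_littleo_pow (m : nat) : (fun=> 1 : R) =o_\oo (fun n : nat => n%:R ^+ m.+1 : R).
Proof. exact: pow_littleo_pow (ltn0Sn m). Qed.

Lemma sum_pow_mul_littleo (e : nat -> R) (m : nat) :
  (fun n => \sum_(0 <= k < n) e k) =o_\oo (fun n : nat => n%:R : R) ->
  (fun n => \sum_(0 <= x < n) x%:R ^+ m * e x) =o_\oo (fun n : nat => n%:R ^+ m.+1 : R).
Proof.
move=> hE.
pose D j : R := j.+1%:R ^+ m - j%:R ^+ m.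
have D0 j : 0 <= D j by rewrite subr_ge0 lerXn2r ?nnegrE ?ler_nat.
have -> : (fun n => \sum_(0 <= x < n) x%:R ^+ m * e x) =
    (fun n => n%:R ^+ m * \sum_(0 <= k < n) e k)
    - (fun n => \sum_(0 <= j < n) D j * \sum_(0 <= k < j.+1) e k).
  by apply/funext => n; rewrite /= sum_by_parts.
have head : (fun n => n%:R ^+ m * \sum_(0 <= k < n) e k)
    =o_\oo (fun n : nat => n%:R ^+ m.+1 : R).
  rewrite (_ : (fun n : nat => n%:R ^+ m.+1 : R) = (fun n => n%:R ^+ m * n%:R)).
    exact: littleoMl (fun n : nat => n%:R ^+ m : R) hE.
  by apply/funext => n; rewrite exprSr.
have hES : (fun j => \sum_(0 <= k < j.+1) e k) =o_\oo (fun j : nat => j.+1%:R : R).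
  apply/eqoP => eps eps0; have /eqoP/(_ eps eps0)[N _ hN] := hE.
  by exists N => // j /= jN; apply: hN; exact: leqW.
have tail : (fun n => \sum_(0 <= j < n) D j * \sum_(0 <= k < j.+1) e k)
    =o_\oo (fun n : nat => n%:R ^+ m.+1 : R).
  apply: (@littleo_partial_sums _ _ (fun j => D j * j.+1%:R)).
  - exact: (littleoMl D hES).
  - apply/eqO_exP; exists 1 => //; apply: nearW => n.
    rewrite mul1r ger0_norm ?sumr_ge0 // (ger0_norm (exprn_ge0 _ (ler0n R n))).
    apply: le_trans (_ : _ <= \sum_(0 <= j < n) D j * n%:R) _.
      rewrite big_nat_cond [leRHS]big_nat_cond; apply: ler_sum => j /andP[/andP[_ jn] _].
      by rewrite normrM (ger0_norm (D0 j)) ger0_norm // ler_wpM2l // ler_nat.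
    rewrite -big_distrl /= (telescope_sumr (fun j => (j%:R : R) ^+ m)) // exprSr.
    by rewrite ler_wpM2r // gerBl exprn_ge0.
  - exact: one_littleo_pow.
by rewrite head tail oppo addo.
Qed.

Lemma sum_mul_bigO_littleo (a r : nat -> R) (m : nat) :
  (fun n => \sum_(0 <= k < n) `|a k|) =O_\oo (fun n : nat => n%:R : R) ->
  r =o_\oo (fun n : nat => n%:R ^+ m : R) ->
  (fun n => \sum_(0 <= x < n) a x * r x) =o_\oo (fun n : nat => n%:R ^+ m.+1 : R).
Proof.
move=> /eqO_exP[k k0 hk] hr.
apply: (@littleo_partial_sums _ _ (fun x => a x * x%:R ^+ m)).
- exact: littleoMl.
- apply/eqO_exP; exists k => //; apply: filterS hk => n.
  rewrite ger0_norm ?sumr_ge0 // (ger0_norm (ler0n R n)) => sum_a.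
  rewrite ger0_norm ?sumr_ge0 // (ger0_norm (exprn_ge0 _ (ler0n R n))) exprSr mulrCA.
  apply: le_trans (_ : _ <= \sum_(0 <= x < n) `|a x| * n%:R ^+ m) _.
    rewrite big_nat_cond [leRHS]big_nat_cond; apply: ler_sum => x /andP[/andP[_ xn] _].
    rewrite normrM (ger0_norm (exprn_ge0 _ (ler0n R x))) ler_wpM2l //.
    by rewrite lerXn2r ?nnegrE ?ler_nat // ltnW.
  by rewrite -big_distrl /= mulrC ler_wpM2l // exprn_ge0.
- exact: one_littleo_pow.
Qed.

Lemma sum_mul_asymptotic (a b : nat -> R) (q c : R) (m : nat) :
  (fun n => \sum_(0 <= k < n) a k - q * n%:R) =o_\oo (fun n : nat => n%:R : R) ->
  (fun n => \sum_(0 <= k < n) `|a k|) =O_\oo (fun n : nat => n%:R : R) ->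
  (fun n => b n - c * n%:R ^+ m) =o_\oo (fun n : nat => n%:R ^+ m : R) ->
  (fun n => \sum_(0 <= x < n) b x * a x - c * q / m.+1%:R * n%:R ^+ m.+1)
    =o_\oo (fun n : nat => n%:R ^+ m.+1 : R).
Proof.
move=> ha hA hb.
have hE : (fun n => \sum_(0 <= k < n) (a k - q)) =o_\oo (fun n : nat => n%:R : R).
  by rewrite (_ : (fun n => _) = (fun n => \sum_(0 <= k < n) a k - q * n%:R)) //;
    apply/funext => n; rewrite sumrB sumr_const_nat subn0 mulr_natr.
have weighted := sum_pow_mul_littleo _ m hE.
have remainder := sum_mul_bigO_littleo _ _ _ hA hb.
have -> : (fun n => \sum_(0 <= x < n) b x * a x - c * q / m.+1%:R * n%:R ^+ m.+1) =
    c *: (fun n => \sum_(0 <= x < n) x%:R ^+ m * (a x - q))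
    + (c * q) *: (fun n => \sum_(0 <= x < n) x%:R ^+ m - n%:R ^+ m.+1 / m.+1%:R)
    + (fun n => \sum_(0 <= x < n) a x * (b x - c * x%:R ^+ m)).
  have scaleE (x y : R) : x *: y = x * y by [].
  apply/funext => n; rewrite !fctE /= !scaleE.
  have split_sum : \sum_(0 <= x < n) b x * a x =
      c * \sum_(0 <= x < n) x%:R ^+ m * (a x - q) + c * q * \sum_(0 <= x < n) x%:R ^+ m
      + \sum_(0 <= x < n) a x * (b x - c * x%:R ^+ m).
    rewrite !mulr_sumr -!big_split /=; apply: eq_bigr => x _; ring.
  by rewrite split_sum; ring.
apply: littleoD; last exact: remainder.
by apply: littleoD; apply: littleoZ; [exact: weighted | exact: sum_powers_littleo].
Qed.

Lemma nested_sum_asymptotic (g : nat -> nat -> R) (q : nat -> R) :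
  (forall j, (fun n => \sum_(0 <= k < n) g j k - q j * n%:R)
     =o_\oo (fun n : nat => n%:R : R)) ->
  (forall j, (fun n => \sum_(0 <= k < n) `|g j k|) =O_\oo (fun n : nat => n%:R : R)) ->
  forall nu, (fun n => nested_sum g nu n - (nu`!%:R)^-1 * \prod_(j < nu) q j * n%:R ^+ nu)
     =o_\oo (fun n : nat => n%:R ^+ nu : R).
Proof.
move=> hg hG; elim=> [|nu IH].
  apply/eqoP => e e0; apply: nearW => n.
  by rewrite /= big_ord0 fact0 invr1 !mulr1 subrr normr0 mulr_ge0 // ltW.
have -> : (nu.+1`!%:R)^-1 * \prod_(j < nu.+1) q j =
    (nu`!%:R)^-1 * \prod_(j < nu) q j * q nu / nu.+1%:R.
  by rewrite big_ord_recr factS natrM invfM /=; ring.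
exact: sum_mul_asymptotic (hg nu) (hG nu) IH.
Qed.

Lemma cesaro_littleo (u : nat -> R) (l : R) :
  (fun n => n%:R^-1 * \sum_(0 <= k < n.+1) u k) @ \oo --> l ->
  (fun n => \sum_(0 <= k < n) u k - l * n%:R) =o_\oo (fun n : nat => n%:R : R).
Proof.
(* The averages in the hypothesis divide n + 1 terms by n, whence the shift to n.+1. *)
move=> /cvgrPdist_le avg; apply/eqoP => e e0; apply: near_inftyS.
have e2 : 0 < e / 2 by rewrite divr_gt0.
near=> n.
have n0 : 0 < n%:R :> R by rewrite ltr0n; near: n; exact: nbhs_infty_gt.
have -> : \sum_(0 <= k < n.+1) u k - l * n.+1%:R
    = n%:R * (n%:R^-1 * \sum_(0 <= k < n.+1) u k - l) - l.
  by rewrite mulrBr mulrA mulfV ?gt_eqF // mul1r -natr1; ring.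
apply: le_trans (ler_normB _ _) _.
rewrite normrM (ger0_norm (ltW n0)) distrC (ger0_norm (ler0n R n.+1)).
have avg_n : `|l - n%:R^-1 * \sum_(0 <= k < n.+1) u k| <= e / 2.
  by near: n; exact: avg.
have l_n : `|l| <= e / 2 * n.+1%:R.
  rewrite mulrC -ler_pdivrMr // invf_div; apply: ltW; near: n.
  have [N _ hN] := nbhs_infty_gtr (`|l| * (2 / e)).
  by exists N => // n /= Nn; apply: lt_le_trans (hN _ Nn) _; rewrite ler_nat.
apply: le_trans (lerD (ler_wpM2l (ltW n0) avg_n) l_n) _.
have -> : e * n.+1%:R = e / 2 * n.+1%:R + e / 2 * n.+1%:R by rewrite -mulrDl -splitr.
by rewrite lerD2r mulrC ler_wpM2l ?ler_nat // ltW.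
Unshelve. all: by end_near. Qed.

Lemma littleo_pow_cvg (u : nat -> R) (c : R) (p : nat) :
  (fun n => u n - c * n%:R ^+ p) =o_\oo (fun n : nat => n%:R ^+ p : R) ->
  (fun n => (n%:R ^+ p)^-1 * u n) @ \oo --> c.
Proof.
move=> /eqoP hu; apply/cvgrPdist_le => e e0; near=> n.
have np : 0 < n%:R ^+ p :> R.
  by rewrite exprn_gt0 // ltr0n; near: n; exact: nbhs_infty_gt.
have -> : c - (n%:R ^+ p)^-1 * u n = - ((n%:R ^+ p)^-1 * (u n - c * n%:R ^+ p)).
  by rewrite mulrBr mulrCA mulVf ?gt_eqF // mulr1 opprB.
have hun : `|u n - c * n%:R ^+ p| <= e * `|n%:R ^+ p| by near: n; exact: hu.
rewrite normrN normrM ger0_norm ?invr_ge0 ?(ltW np) // ler_pdivrMl // [leRHS]mulrC.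
by rewrite (ger0_norm (ltW np)) in hun.
Unshelve. all: by end_near. Qed.

End PowerAsymptotics.

Lemma limn_esup_lt_bounded {R : realType} (v : nat -> R) :
  (limn_esup (fun n => (v n)%:E) < +oo)%E -> exists M : R, \forall n \near \oo, v n <= M.
Proof.
set w := fun n => (v n)%:E; rewrite limn_esup_lim.
have -> : limn (esups w) = ereal_inf (range (esups w)).
  by apply/cvg_lim => //; exact: cvg_esups_inf.
move=> /ereal_inf_lt[_ [N _ <-]].
have ub m : (N <= m)%N -> (w m <= esups w N)%E.
  by move=> Nm; apply: ereal_sup_ubound; exists m.
case: (esups w N) ub => [r| |] //= ub _; last by have := ub N (leqnn N).
by exists r, N => // m /ub; rewrite lee_fin.
Qed.

Lemma sum_norm_bigO {R : realType} (u v : nat -> R) :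
  (forall k, `|u k| <= v k) ->
  (limn_esup (fun n => (n%:R^-1 * \sum_(0 <= k < n.+1) v k)%:E) < +oo)%E ->
  (fun n => \sum_(0 <= k < n) `|u k|) =O_\oo (fun n : nat => n%:R : R).
Proof.
move=> uv /limn_esup_lt_bounded[M avgM]; apply/eqO_exP; exists (`|M| + 1).
  by rewrite ltr_wpDl.
near=> n.
have n0 : 0 < n%:R :> R by rewrite ltr0n; near: n; exact: nbhs_infty_gt.
rewrite ger0_norm ?sumr_ge0 // (ger0_norm (ltW n0)).
apply: le_trans (_ : _ <= \sum_(0 <= k < n.+1) v k) _.
  rewrite big_nat_recr //= -[leLHS]addr0 lerD ?(le_trans _ (uv n)) //.
  by apply: ler_sum => k _; exact: uv.
have : n%:R^-1 * \sum_(0 <= k < n.+1) v k <= M by near: n.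
rewrite ler_pdivrMl // => /le_trans; apply.
by rewrite mulrC ler_wpM2r ?(ltW n0) // (le_trans (ler_norm M)) // lerDl.
Unshelve. all: by end_near. Qed.

Lemma normr_entry_le_eucl_norm {R : realType} {d : nat} (x : 'rV[R]_d) (i : 'I_d) :
  `|x ord0 i| <= eucl_norm x.
Proof.
rewrite /eucl_norm -sqrtr_sqr ler_wsqrtr //.
by rewrite (bigD1 i) //= lerDl sumr_ge0 // => j _; rewrite sqr_ge0.
Qed.

Lemma iter_sum_nested_sum {R : realType} {d nu : nat} (xi : nat -> 'rV[R]_d)
    (s : nu.-tuple 'I_d) (i0 : 'I_d) (n : nat) :
  iter_sum xi s n = nested_sum (fun j k => xi k ord0 (nth i0 s j)) nu n.
Proof.
rewrite -(nested_sum_tuples _ _ _ _ (leqnn n)) /iter_sum; apply: eq_big => [t|t _].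
  rewrite pairwise_rcons -sorted_pairwise; last exact: ltn_trans.
  by rewrite andb_idl // => _; rewrite all_map; apply/allP => k _ /=.
by apply: eq_bigr => j _; rewrite (tnth_nth i0).
Qed.

Theorem theorem2p1 (R : realType) (d : nat) (xi : nat -> 'rV[R]_d) (Q : 'rV[R]_d) :
  (limn_esup (fun n : nat => ((n%:R)^-1 * \sum_(0 <= k < n.+1) eucl_norm (xi k))%:E)
     < +oo)%E ->
  (forall i : 'I_d,
     (fun n : nat => (n%:R)^-1 * \sum_(0 <= k < n.+1) xi k ord0 i) @ \oo --> Q ord0 i) ->
  forall (nu : nat) (s : nu.-tuple 'I_d), (1 <= nu)%N ->
    (fun n : nat => (n%:R ^+ nu)^-1 * iter_sum xi s n) @ \oo -->
      (nu`!%:R)^-1 * \prod_(j < nu) Q ord0 (tnth s j).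
Proof.
move=> norm_avg_bounded avg_cvg nu s nu_gt0.
(* [1 <= nu] only serves to provide a default index for [nth]. *)
pose i0 := tnth s (Ordinal nu_gt0).
pose g j k := xi k ord0 (nth i0 s j).
have g_avg j : (fun n => \sum_(0 <= k < n) g j k - Q ord0 (nth i0 s j) * n%:R)
    =o_\oo (fun n : nat => n%:R : R).
  exact: cesaro_littleo (avg_cvg (nth i0 s j)).
have g_bigO j : (fun n => \sum_(0 <= k < n) `|g j k|) =O_\oo (fun n : nat => n%:R : R).
  exact: sum_norm_bigO _ _ (fun k => normr_entry_le_eucl_norm (xi k) _) norm_avg_bounded.
have -> : \prod_(j < nu) Q ord0 (tnth s j) = \prod_(j < nu) Q ord0 (nth i0 s j).
  by apply: eq_bigr => j _; rewrite (tnth_nth i0).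
under eq_fun => n do rewrite (iter_sum_nested_sum xi s i0).
exact: littleo_pow_cvg (nested_sum_asymptotic _ _ g_avg g_bigO nu).
Qed.
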